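(* Let $G$ be a graph and $X\subseteq V(G)$ a vertex cover of $G$. For any set $\mathcal{B}$ of closed neighborhoods of $G$, NCTD$(\mathcal{B})\le 2^{|X|+1}+|X|$.
   Context: $N[v]$ is the closed neighborhood of $v$. A teaching map for a set $\mathcal{B}$ of closed neighborhoods assigns to each $B\in\mathcal{B}$ a set $T(B)\subseteq V(G)$. A vertex $w$ distinguishes $B,B'$ if $w$ lies in exactly one of $B,B'$. $T$ is non-clashing if for all distinct $B,B'\in\mathcal{B}$ some $w\in T(B)\cup T(B')$ distinguishes $B$ and $B'$; its size is $\max_{B\in\mathcal{B}}|T(B)|$. NCTD$(\mathcal{B})$ is the minimum size of a non-clashing teaching map for $\mathcal{B}$. *)

From mathcomp Require Import all_boot.
Set Implicit Arguments. Unset Strict Implicit. Unset Printing Implicit Defensive.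

(* A (finite simple) graph on vertex type T is a symmetric irreflexive relation e. *)

Definition cnbh (T : finType) (e : rel T) (v : T) : {set T} :=
  [set u | (u == v) || e v u].

Definition vertex_cover (T : finType) (e : rel T) (X : {set T}) : Prop :=
  forall u v, e u v -> (u \in X) || (v \in X).

Definition is_cnbh_family (T : finType) (e : rel T) (B : {set {set T}}) : Prop :=
  forall S, S \in B -> exists v, S = cnbh e v.

(* a teaching map assigns to each set a set of vertices (only values on B matter) *)
Definition non_clashing (T : finType) (B : {set {set T}})
  (Tm : {ffun {set T} -> {set T}}) : bool :=
  [forall S in B, forall S' in B, (S != S') ==>
     [exists w in Tm S :|: Tm S', (w \in S) != (w \in S')]].

Definition tmap_size (T : finType) (B : {set {set T}})
  (Tm : {ffun {set T} -> {set T}}) : nat :=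
  \max_(S in B) #|Tm S|.

Definition has_nc_map_of_size (T : finType) (B : {set {set T}}) (n : nat) : bool :=
  [exists Tm : {ffun {set T} -> {set T}}, non_clashing B Tm && (tmap_size B Tm <= n)].

Lemma has_nc_map_exists (T : finType) (B : {set {set T}}) :
  exists n, has_nc_map_of_size B n.
Proof.
exists #|T|; apply/existsP; exists [ffun _ => setT]; apply/andP; split.
- apply/forallP => S; apply/implyP => _; apply/forallP => S'; apply/implyP => _.
  apply/implyP => neq.
  case: (pickP (fun w => (w \in S) != (w \in S'))) => [w hw | none].
    by apply/existsP; exists w; rewrite ffunE in_setU in_setT.
  have eSS : S = S' by apply/setP => w; move: (none w) => /negbFE/eqP.
  by rewrite eSS eqxx in neq.
- by apply/bigmax_leqP => S _; rewrite ffunE cardsT.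
Qed.

Definition NCTD (T : finType) (B : {set {set T}}) : nat :=
  ex_minn (has_nc_map_exists B).

From mathcomp Require Import all_boot.

(* A closed neighbourhood N[v] with v outside the vertex cover X has
   N[v] :\: X \subset [set v], so at most #|X| sets of B are "wide", i.e. have
   two vertices outside X.  Teach every set with X, one separating vertex
   against each wide set and, if it is narrow, its at most one vertex outside
   X: two distinct narrow sets agreeing on X differ at a taught vertex outside
   X.  This gives the sharper bound 2 #|X| + 1. *)

Set Implicit Arguments.
Unset Strict Implicit.
Unset Printing Implicit Defensive.

Lemma NCTD_le (T : finType) (B : {set {set T}}) (Tm : {ffun {set T} -> {set T}})
    (n : nat) :
  non_clashing B Tm -> tmap_size B Tm <= n -> NCTD B <= n.
Proof.
move=> ncTm sizeTm; rewrite /NCTD; case: ex_minnP => m _ min_m.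
by apply: min_m; apply/existsP; exists Tm; rewrite ncTm.
Qed.

Lemma non_clashingP (T : finType) (B : {set {set T}})
    (Tm : {ffun {set T} -> {set T}}) :
  (forall S S', S \in B -> S' \in B -> S != S' ->
     exists2 w, w \in Tm S :|: Tm S' & (w \in S) != (w \in S')) ->
  non_clashing B Tm.
Proof.
move=> sep; apply/forallP => S; apply/implyP => SB; apply/forallP => S'.
apply/implyP => S'B; apply/implyP => neqSS'.
by have [w wTm wS] := sep S S' SB S'B neqSS'; apply/existsP; exists w; rewrite wTm.
Qed.

Section Separators.
Variable T : finType.
Implicit Types (S : {set T}) (W : {set {set T}}).

Definition separator S S' : option T := [pick w | (w \in S) != (w \in S')].

Lemma separatorP S S' :
  S != S' -> exists2 w, separator S S' = Some w & (w \in S) != (w \in S').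
Proof.
rewrite /separator; case: pickP => [w wS _ | none]; first by exists w.
by case/eqP; apply/setP => w; apply/eqP/negPn/negP; rewrite none.
Qed.

Definition separators W S : {set T} :=
  [set w | Some w \in [set separator S S' | S' in W]].

Lemma card_separators W S : #|separators W S| <= #|W|.
Proof.
rewrite -(card_imset _ (@Some_inj _)).
apply: leq_trans (leq_imset_card (separator S) W); apply: subset_leq_card.
by apply/subsetP => _ /imsetP [w wsep ->]; rewrite inE in wsep.
Qed.

Lemma separatorsP W S S' :
  S' \in W -> S != S' -> exists2 w, w \in separators W S & (w \in S) != (w \in S').
Proof.
move=> S'W /separatorP [w sepw wS]; exists w => //.
by rewrite inE -sepw imset_f.
Qed.

End Separators.

Section CoverTeachingMap.
Variables (T : finType) (X : {set T}) (B : {set {set T}}).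

Definition wide : {set {set T}} := [set S in B | 1 < #|S :\: X|].

Definition cover_tmap : {ffun {set T} -> {set T}} :=
  [ffun S => X :|: separators wide S :|: (if #|S :\: X| <= 1 then S :\: X else set0)].

Lemma cover_tmap_non_clashing : non_clashing B cover_tmap.
Proof.
apply: non_clashingP => S S' SB S'B.
wlog [S'wide | [Snarrow S'narrow]]: S S' SB S'B /
    S' \in wide \/ S \notin wide /\ S' \notin wide.
  move=> sep neqSS'; case: (boolP (S' \in wide)) => [|S'narrow]; first by eauto.
  case: (boolP (S \in wide)) => [Swide | Snarrow]; last by eauto.
  have [|w wTm wS] := sep S' S S'B SB (or_introl Swide); first by rewrite eq_sym.
  by exists w; [rewrite setUC | rewrite eq_sym].
- move=> /(separatorsP S'wide) [w wsep wS].
  by exists w; rewrite // ffunE !in_setU wsep orbT.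
move: Snarrow S'narrow; rewrite !inE SB S'B -!leqNgt => Snarrow S'narrow.
move=> /separatorP [w _ wS]; exists w => //.
rewrite !ffunE Snarrow S'narrow !in_setU !in_setD.
move: wS; case: (w \in X); case: (w \in S); case: (w \in S'); by rewrite ?orbT.
Qed.

Lemma cover_tmap_size : tmap_size B cover_tmap <= #|X| + #|wide| + 1.
Proof.
apply/bigmax_leqP => S _; rewrite ffunE.
apply: leq_trans (leq_card_setU _ _) _; apply: leq_add.
  apply: leq_trans (leq_card_setU _ _) _.
  by rewrite leq_add2l card_separators.
by case: ifP; rewrite ?cards0.
Qed.

End CoverTeachingMap.

Lemma cnbh_setD_cover (T : finType) (e : rel T) (X : {set T}) (v : T) :
  vertex_cover e X -> v \notin X -> cnbh e v :\: X \subset [set v].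
Proof.
move=> coverX vX; apply/subsetP => u; rewrite !inE => /andP [uX /orP [// | evu]].
by move: (coverX _ _ evu); rewrite (negbTE uX) (negbTE vX).
Qed.

Lemma card_wide_cnbh (T : finType) (e : rel T) (X : {set T}) (B : {set {set T}}) :
  vertex_cover e X -> is_cnbh_family e B -> #|wide X B| <= #|X|.
Proof.
move=> coverX cnbhB; apply: leq_trans (leq_imset_card (cnbh e) X).
apply: subset_leq_card; apply/subsetP => S; rewrite inE => /andP [SB].
have [v ->] := cnbhB S SB; case: (boolP (v \in X)) => [vX _ | vX wide_v].
  exact: imset_f.
have := subset_leq_card (cnbh_setD_cover coverX vX).
by rewrite cards1 leqNgt wide_v.
Qed.

Theorem lemma3 (T : finType) (e : rel T) (e_sym : symmetric e)
  (e_irr : irreflexive e) (X : {set T}) (hX : vertex_cover e X)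
  (B : {set {set T}}) (hB : is_cnbh_family e B) :
  NCTD B <= 2 ^ (#|X| + 1) + #|X|.
Proof.
apply: leq_trans (NCTD_le (cover_tmap_non_clashing X B) (cover_tmap_size X B)) _.
rewrite -addnA addnC leq_add2r.
apply: leq_trans (ltnW (ltn_expl _ (isT : 1 < 2))).
by rewrite leq_add2r (card_wide_cnbh hX hB).
Qed.
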